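(* Let $\mathcal{X}\subseteq\mathbb{R}^D$, let $k:\mathcal{X}\times\mathcal{X}\to\mathbb{R}$ be an arbitrary positive definite kernel with reproducing kernel Hilbert space $\mathcal{H}_k$, and suppose $s\in\mathcal{H}_k$. Let $\mathbf{X}=\{\mathbf{x}_1,\dots,\mathbf{x}_N\}\subset\mathcal{X}$ and let the measurements be $y_i=s(\mathbf{x}_i)+\epsilon_i$, $i=1,\dots,N$, where the noise is bounded: $\epsilon_i^2<\sigma_\epsilon^2$ for all $i$. Then for every $\mathbf{x}\in\mathcal{X}$, $$E(\mathbf{x}\mid\mathbf{y}_{\mathbf{X}})\le \|s\|_{\mathcal{H}_k}\,P_{\mathbf{X}}(\mathbf{x})+\sqrt{\sigma_\epsilon^2\,N\,\Lambda_k^2(\mathbf{x})},$$ where $P_{\mathbf{X}}(\mathbf{x})=\sqrt{\sigma^2(\mathbf{x},\mathbf{x}\mid\mathbf{y}_{\mathbf{X}})}$ is the power function of $\mathbf{X}$ and $\Lambda_k(\mathbf{x})=\|K_{\mathbf{X}}^{-1}\mathbf{k}_{\mathbf{X}}(\mathbf{x})\|$ (Euclidean norm).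
   Context: A function $k:\mathcal{X}\times\mathcal{X}\to\mathbb{R}$ is positive definite if for every finite $\mathbf{X}\subset\mathcal{X}$ the matrix $[K_{\mathbf{X}}]_{i,j}=k(\mathbf{x}_i,\mathbf{x}_j)$ is positive definite. Notation: $[\mathbf{k}_{\mathbf{X}}(\mathbf{x})]_i=k(\mathbf{x},\mathbf{x}_i)$, $[\mathbf{y}_{\mathbf{X}}]_i=y_i$. The (zero-mean prior) Gaussian process regression estimate has mean $\mu(\mathbf{x}\mid\mathbf{y}_{\mathbf{X}})=\mathbf{k}_{\mathbf{X}}^{T}(\mathbf{x})K_{\mathbf{X}}^{-1}\mathbf{y}_{\mathbf{X}}$ and covariance $\sigma^2(\mathbf{x},\mathbf{x}'\mid\mathbf{y}_{\mathbf{X}})=k(\mathbf{x},\mathbf{x}')-\mathbf{k}_{\mathbf{X}}^{T}(\mathbf{x})K_{\mathbf{X}}^{-1}\mathbf{k}_{\mathbf{X}}(\mathbf{x}')$. The deterministic error is $E(\mathbf{x}\mid\mathbf{y}_{\mathbf{X}})=|s(\mathbf{x})-\mu(\mathbf{x}\mid\mathbf{y}_{\mathbf{X}})|$. *)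

From HB Require Import structures.
From mathcomp Require Import all_boot all_order all_algebra.
From mathcomp Require Import reals.
Set Implicit Arguments. Unset Strict Implicit. Unset Printing Implicit Defensive.
Import Order.TTheory GRing.Theory Num.Theory.
Local Open Scope ring_scope.

Section Kernels.
Variables (R : realType) (T : Type).

Definition gram (k : T -> T -> R) n (p : 'I_n -> T) : 'M[R]_n :=
  \matrix_(i, j) k (p i) (p j).

Definition pd_kernel (k : T -> T -> R) : Prop :=
  forall n (p : 'I_n -> T), injective p ->
    forall v : 'cV[R]_n, v != 0 -> 0 < (v^T *m gram k p *m v) ord0 ord0.

Definition kvec (k : T -> T -> R) n (p : 'I_n -> T) (x : T) : 'cV[R]_n :=
  \col_i k x (p i).

Definition gp_mean (k : T -> T -> R) n (p : 'I_n -> T) (y : 'cV[R]_n) (x : T) : R :=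
  ((kvec k p x)^T *m invmx (gram k p) *m y) ord0 ord0.

Definition gp_cov (k : T -> T -> R) n (p : 'I_n -> T) (x x' : T) : R :=
  k x x' - ((kvec k p x)^T *m invmx (gram k p) *m kvec k p x') ord0 ord0.

Definition power_fun (k : T -> T -> R) n (p : 'I_n -> T) (x : T) : R :=
  Num.sqrt (gp_cov k p x x).

Definition eucl_norm n (v : 'cV[R]_n) : R := Num.sqrt (\sum_i (v i ord0) ^+ 2).

Definition lebesgue_fun (k : T -> T -> R) n (p : 'I_n -> T) (x : T) : R :=
  eucl_norm (invmx (gram k p) *m kvec k p x).

(* By the
   Moore–Aronszajn theorem such a space is unique, namely H_k. *)
Record is_RKHS (k : T -> T -> R) (Hs : (T -> R) -> Prop)
    (ip : (T -> R) -> (T -> R) -> R) : Prop := {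
  rkhs_0 : Hs (fun _ => 0);
  rkhs_lin : forall (a : R) f g, Hs f -> Hs g -> Hs (fun t => a * f t + g t);
  rkhs_sym : forall f g, Hs f -> Hs g -> ip f g = ip g f;
  rkhs_linl : forall (a : R) f g h, Hs f -> Hs g -> Hs h ->
      ip (fun t => a * f t + g t) h = a * ip f h + ip g h;
  rkhs_pos : forall f, Hs f -> 0 <= ip f f;
  rkhs_def : forall f, Hs f -> ip f f = 0 -> f = (fun _ => 0);
  rkhs_complete : forall u : nat -> T -> R, (forall m, Hs (u m)) ->
      (forall e : R, 0 < e -> exists M, forall m n, (M <= m)%N -> (M <= n)%N ->
          Num.sqrt (ip (fun t => u m t - u n t) (fun t => u m t - u n t)) < e) ->
      exists f, Hs f /\ forall e : R, 0 < e -> exists M, forall n, (M <= n)%N ->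
          Num.sqrt (ip (fun t => u n t - f t) (fun t => u n t - f t)) < e;
  rkhs_kmem : forall x, Hs (fun t => k t x);
  rkhs_repr : forall f x, Hs f -> ip f (fun t => k t x) = f x
}.

Definition rkhs_norm (ip : (T -> R) -> (T -> R) -> R) (f : T -> R) : R :=
  Num.sqrt (ip f f).

End Kernels.

From HB Require Import structures.
From mathcomp Require Import all_boot all_order all_algebra.
From mathcomp Require Import reals.
From mathcomp Require Import ring lra.
From mathcomp Require Import boolp.
Set Implicit Arguments. Unset Strict Implicit. Unset Printing Implicit Defensive.

Import Order.TTheory GRing.Theory Num.Theory.
Local Open Scope ring_scope.

(** Write [w = K_X^{-1} k_X(x)], so that the posterior mean is [sum_i w_i y_i].
  The error functional [f |-> f x - sum_i w_i f (x_i)] is represented in the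
  RKHS by [g = k(., x) - sum_i w_i k(., x_i)], and [<g, g> = sigma^2(x, x)]
  because [g] vanishes on [X].  Hence the noiseless part of the error is
  [<s, g>], bounded by [||s|| P_X(x)] (Cauchy-Schwarz in [H_k]), and the
  noise part is [sum_i w_i eps_i], bounded by [Lambda_k(x) sqrt(N sigma_eps^2)]
  (Cauchy-Schwarz in [R^N]). *)

Lemma ge0_quadratic_norm_le (R : rcfType) (A B C : R) :
  (forall t, 0 <= A * t ^+ 2 + 2 * B * t + C) -> 0 <= A -> 0 <= C ->
  `|B| <= Num.sqrt A * Num.sqrt C.
Proof.
move=> quad_ge0 A_ge0 C_ge0.
suff B2_le : B ^+ 2 <= A * C.
  by rewrite -sqrtrM // -sqrtr_sqr ler_wsqrtr.
have [A0|A_neq0] := eqVneq A 0.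
  have [->|B_neq0] := eqVneq B 0; first by rewrite expr0n /= mulr_ge0.
  have := quad_ge0 (- (C + 1) / (2 * B)).
  have -> : 2 * B * (- (C + 1) / (2 * B)) = - (C + 1) by field.
  rewrite A0; lra.
have A_gt0 : 0 < A by rewrite lt_def A_neq0.
have := quad_ge0 (- B / A).
have -> : A * (- B / A) ^+ 2 + 2 * B * (- B / A) + C = C - B ^+ 2 / A by field.
by rewrite subr_ge0 ler_pdivrMr // mulrC.
Qed.

Section EuclideanNorm.
Variables (R : realType) (n : nat).
Implicit Types (u v : 'cV[R]_n).

Lemma eucl_norm_cauchy_schwarz u v :
  `|\sum_i u i ord0 * v i ord0| <= eucl_norm u * eucl_norm v.
Proof.
apply: ge0_quadratic_norm_le; try by apply: sumr_ge0 => i _; exact: sqr_ge0.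
move=> t; rewrite mulr_suml mulr_sumr mulr_suml -!big_split /=.
apply: sumr_ge0 => i _.
have -> : u i ord0 ^+ 2 * t ^+ 2 + 2 * (u i ord0 * v i ord0) * t + v i ord0 ^+ 2
  = (u i ord0 * t + v i ord0) ^+ 2 by ring.
exact: sqr_ge0.
Qed.

Lemma eucl_norm_le v (c : R) :
  (forall i, v i ord0 ^+ 2 <= c) -> eucl_norm v <= Num.sqrt (c * n%:R).
Proof.
move=> v_le; apply: ler_wsqrtr.
have -> : c * n%:R = \sum_(i < n) c by rewrite sumr_const card_ord mulr_natr.
exact: ler_sum.
Qed.

End EuclideanNorm.

Section RKHS.
Variables (R : realType) (T : Type) (k : T -> T -> R).
Variables (Hs : (T -> R) -> Prop) (ip : (T -> R) -> (T -> R) -> R).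
Hypothesis HR : is_RKHS k Hs ip.

Lemma rkhs_ip0l h : Hs h -> ip (fun _ => 0) h = 0.
Proof.
move=> Hh; have := rkhs_linl HR 1 (rkhs_0 HR) (rkhs_0 HR) Hh.
have -> : (fun t : T => 1 * (fun _ : T => 0 : R) t + (fun _ : T => 0) t) =
           (fun _ => 0).
  by apply: funext => t; rewrite mul1r addr0.
by rewrite mul1r; lra.
Qed.

Lemma rkhs_ip_kl z h : Hs h -> ip (fun t => k t z) h = h z.
Proof. by move=> Hh; rewrite (rkhs_sym HR (rkhs_kmem HR z) Hh) (rkhs_repr HR). Qed.

Lemma rkhs_kernel_sym u v : k u v = k v u.
Proof.
by rewrite -(rkhs_ip_kl u (rkhs_kmem HR v)) (rkhs_repr HR _ (rkhs_kmem HR u)).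
Qed.

Lemma rkhs_sub_mem f g : Hs f -> Hs g -> Hs (fun t => f t - g t).
Proof.
move=> Hf Hg; have := rkhs_lin HR (-1) Hg Hf.
have -> // : (fun t => -1 * g t + f t) = (fun t => f t - g t).
by apply: funext => t; rewrite mulN1r addrC.
Qed.

Lemma rkhs_ip_subl f g h : Hs f -> Hs g -> Hs h ->
  ip (fun t => f t - g t) h = ip f h - ip g h.
Proof.
move=> Hf Hg Hh; have := rkhs_linl HR (-1) Hg Hf Hh.
have -> : (fun t => -1 * g t + f t) = (fun t => f t - g t).
  by apply: funext => t; rewrite mulN1r addrC.
by rewrite mulN1r addrC.
Qed.

Section LinearCombination.
Variables (I : Type) (c : I -> R) (F : I -> T -> R).
Hypothesis HF : forall i, Hs (F i).

Let sum_cons i r' :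
  (fun t => \sum_(j <- i :: r') c j * F j t) =
  (fun t => c i * F i t + \sum_(j <- r') c j * F j t).
Proof. by apply: funext => t; rewrite big_cons. Qed.

Let sum_nil : (fun t => \sum_(j <- [::]) c j * F j t) = (fun _ => 0).
Proof. by apply: funext => t; rewrite big_nil. Qed.

Lemma rkhs_sum_mem r : Hs (fun t => \sum_(i <- r) c i * F i t).
Proof.
elim: r => [|i r' IH].
  by rewrite sum_nil; exact: (rkhs_0 HR).
by rewrite sum_cons; exact: (rkhs_lin HR (c i) (HF i) IH).
Qed.

Lemma rkhs_ip_suml r h : Hs h ->
  ip (fun t => \sum_(i <- r) c i * F i t) h = \sum_(i <- r) c i * ip (F i) h.
Proof.
move=> Hh; elim: r => [|i r' IH].
  by rewrite sum_nil big_nil rkhs_ip0l.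
by rewrite sum_cons (rkhs_linl HR _ (HF i) (rkhs_sum_mem r') Hh) IH big_cons.
Qed.

End LinearCombination.

Lemma rkhs_cauchy_schwarz f g : Hs f -> Hs g ->
  `|ip f g| <= rkhs_norm ip f * rkhs_norm ip g.
Proof.
move=> Hf Hg; rewrite mulrC.
apply: ge0_quadratic_norm_le; last 2 first.
- exact: (rkhs_pos HR Hg).
- exact: (rkhs_pos HR Hf).
move=> t; have Htgf := rkhs_lin HR t Hg Hf.
have := rkhs_pos HR Htgf.
rewrite (rkhs_linl HR t Hg Hf Htgf) (rkhs_sym HR Hg Htgf) (rkhs_sym HR Hf Htgf).
rewrite (rkhs_linl HR t Hg Hf Hg) (rkhs_linl HR t Hg Hf Hf) (rkhs_sym HR Hg Hf).
by congr (0 <= _); ring.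
Qed.

End RKHS.

Section Interpolation.
Variables (R : realType) (T : Type) (k : T -> T -> R) (n : nat) (p : 'I_n -> T).

Lemma gram_unitmx : pd_kernel k -> injective p -> gram k p \in unitmx.
Proof.
move=> k_pd p_inj; rewrite unitmxE unitfE; apply/det0P => -[v v_neq0 vK].
have := k_pd n p p_inj v^T; rewrite trmx_eq0 => /(_ v_neq0).
by rewrite trmxK vK mul0mx mxE ltxx.
Qed.

Lemma trmx_gram : (forall u v, k u v = k v u) -> (gram k p)^T = gram k p.
Proof. by move=> k_sym; apply/matrixP => i j; rewrite !mxE k_sym. Qed.

Definition interp_weights x : 'cV[R]_n := invmx (gram k p) *m kvec k p x.

Lemma gram_mul_interp_weights x :
  gram k p \in unitmx -> gram k p *m interp_weights x = kvec k p x.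
Proof. by move=> K_unit; rewrite mulmxA mulmxV // mul1mx. Qed.

Lemma gp_mean_interp_weights y x : (gram k p)^T = gram k p ->
  gp_mean k p y x = \sum_i interp_weights x i ord0 * y i ord0.
Proof.
move=> K_sym; rewrite /gp_mean.
have -> : (kvec k p x)^T *m invmx (gram k p) = (interp_weights x)^T.
  by rewrite trmx_mul trmx_inv K_sym.
by rewrite mxE; apply: eq_bigr => i _; rewrite mxE.
Qed.

Lemma gp_cov_interp_weights x :
  gp_cov k p x x = k x x - \sum_i interp_weights x i ord0 * k x (p i).
Proof.
rewrite /gp_cov -mulmxA mxE; congr (_ - _).
by apply: eq_bigr => i _; rewrite !mxE mulrC.
Qed.

Definition error_representer x : T -> R :=
  fun t => k t x - \sum_i interp_weights x i ord0 * k t (p i).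

Variables (Hs : (T -> R) -> Prop) (ip : (T -> R) -> (T -> R) -> R).
Hypothesis HR : is_RKHS k Hs ip.
Variable x : T.

Lemma error_representer_mem : Hs (error_representer x).
Proof.
have Hk i : Hs (fun t => k t (p i)) by exact: (rkhs_kmem HR).
exact: (rkhs_sub_mem HR (rkhs_kmem HR x) (rkhs_sum_mem HR _ Hk _)).
Qed.

Lemma ip_error_representer h : Hs h ->
  ip (error_representer x) h = h x - \sum_i interp_weights x i ord0 * h (p i).
Proof.
move=> Hh; have Hk i : Hs (fun t => k t (p i)) by exact: (rkhs_kmem HR).
rewrite (rkhs_ip_subl HR (rkhs_kmem HR x) (rkhs_sum_mem HR _ Hk _) Hh).
rewrite (rkhs_ip_kl HR _ Hh) (rkhs_ip_suml HR _ Hk _ Hh).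
by congr (_ - _); apply: eq_bigr => i _; rewrite (rkhs_ip_kl HR _ Hh).
Qed.

Lemma error_representer_pts j :
  gram k p \in unitmx -> error_representer x (p j) = 0.
Proof.
move=> /(gram_mul_interp_weights x)/matrixP/(_ j ord0).
rewrite !mxE => Kw; rewrite /error_representer -(rkhs_kernel_sym HR x) -Kw.
by apply/eqP; rewrite subr_eq0; apply/eqP/eq_bigr => i _; rewrite mxE mulrC.
Qed.

Lemma ip_error_representer_self :
  gram k p \in unitmx ->
  ip (error_representer x) (error_representer x) = gp_cov k p x x.
Proof.
move=> K_unit; rewrite (ip_error_representer error_representer_mem).
rewrite big1 ?subr0 ?gp_cov_interp_weights //.
by move=> i _; rewrite error_representer_pts // mulr0.
Qed.

End Interpolation.

Theorem theorem1 (R : realType) (D : nat) (Xs : 'rV[R]_D -> Prop)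
  (k : {x : 'rV[R]_D | Xs x} -> {x : 'rV[R]_D | Xs x} -> R)
  (Hs : ({x : 'rV[R]_D | Xs x} -> R) -> Prop)
  (ip : ({x : 'rV[R]_D | Xs x} -> R) -> ({x : 'rV[R]_D | Xs x} -> R) -> R)
  (s : {x : 'rV[R]_D | Xs x} -> R)
  (N : nat) (pts : 'I_N -> {x : 'rV[R]_D | Xs x})
  (eps : 'I_N -> R) (y : 'cV[R]_N) (sig_eps : R) :
  pd_kernel k ->
  is_RKHS k Hs ip ->
  Hs s ->
  injective pts ->
  (forall i, y i ord0 = s (pts i) + eps i) ->
  (forall i, eps i ^+ 2 < sig_eps ^+ 2) ->
  forall x : {x : 'rV[R]_D | Xs x},
    `|s x - gp_mean k pts y x| <=
      rkhs_norm ip s * power_fun k pts x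
      + Num.sqrt (sig_eps ^+ 2 * N%:R * lebesgue_fun k pts x ^+ 2).
Proof.
move=> k_pd HR Hs_s pts_inj y_def eps_lt x.
have K_unit := gram_unitmx k_pd pts_inj.
have K_sym := trmx_gram pts (rkhs_kernel_sym HR).
have -> : s x - gp_mean k pts y x =
    ip (error_representer k pts x) s
    - \sum_i interp_weights k pts x i ord0 * (\col_i eps i) i ord0.
  rewrite gp_mean_interp_weights // (ip_error_representer pts HR x Hs_s).
  under eq_bigr do rewrite y_def mulrDr.
  rewrite big_split opprD addrA; congr (_ - _).
  by apply: eq_bigr => i _; rewrite mxE.
apply: le_trans (ler_normB _ _) _; apply: lerD.
  rewrite /power_fun -(ip_error_representer_self HR x K_unit) mulrC.
  exact: (rkhs_cauchy_schwarz HR (error_representer_mem pts HR x) Hs_s).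
apply: le_trans (eucl_norm_cauchy_schwarz _ _) _.
have noise_ge0 : 0 <= sig_eps ^+ 2 * N%:R by rewrite mulr_ge0 ?sqr_ge0.
rewrite /lebesgue_fun sqrtrM // sqrtr_sqr.
rewrite ger0_norm ?sqrtr_ge0 // mulrC; apply: ler_wpM2r; first exact: sqrtr_ge0.
by apply: eucl_norm_le => i; rewrite mxE ltW.
Qed.
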